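(* Let $U_3=(|0\rangle\langle0|\otimes I_2+|1\rangle\langle1|\otimes\sigma_1)\otimes I_2-2\,|1\rangle\langle1|\otimes|0\rangle\langle1|\otimes|1\rangle\langle1|$ and $U_6=(T_{AC}\otimes (I_2)_B)(H\otimes I_2\otimes I_2)U_3$, which equals $$\tfrac{1}{\sqrt2}\Big[|0\rangle\langle0|\otimes I_2\otimes I_2+|0\rangle\langle1|\otimes(\sigma_1\otimes I_2-2|0\rangle\langle1|\otimes|1\rangle\langle1|)+|1\rangle\langle0|\otimes I_2\otimes\sigma_1+|1\rangle\langle1|\otimes(2|0\rangle\langle1|\otimes|0\rangle\langle1|-\sigma_1\otimes\sigma_1)\Big].$$ Then $\mathrm{sr}(U_6)=6$.
   Context: $I_2$ is the $2\times 2$ identity, $\sigma_1=\begin{bmatrix}0&1\\1&0\end{bmatrix}$, $H=\frac{1}{\sqrt2}\begin{bmatrix}1&1\\1&-1\end{bmatrix}$, $\{|0\rangle,|1\rangle\}$ the standard basis of $\mathbb{C}^2$. $T=|0\rangle\langle0|\otimes I_2+|1\rangle\langle1|\otimes\sigma_1$ is the CNOT gate; $T_{AC}\otimes(I_2)_B$ denotes $T$ with control qubit $A$ and target qubit $C$, acting as identity on $B$. Tensor factors are ordered $A\otimes B\otimes C$. For a matrix $U$ on $\mathbb{C}^2\otimes\mathbb{C}^2\otimes\mathbb{C}^2$ (systems $A,B,C$), its Schmidt rank $\mathrm{sr}(U)$ is the least integer $r$ such that $U=\sum_{j=1}^r A_j\otimes B_j\otimes C_j$ with $A_j,B_j,C_j$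 complex $2\times 2$ matrices (i.e. the tensor rank of $U$). *)

From mathcomp Require Import all_boot all_algebra all_field.
From mathcomp Require Import mxtens.
Set Implicit Arguments. Unset Strict Implicit. Unset Printing Implicit Defensive.
Import GRing.Theory Num.Theory.
Local Open Scope ring_scope.

(* Complex scalars: algC (algebraically closed field of characteristic 0 with
   conjugation; all entries here are algebraic). Tensor (Kronecker) product
   [A *t B] from mathcomp.real_closed.mxtens, row index (i,j) |-> i*n + j, so
   A *t B *t C is ordered A (x) B (x) C as in the paper. *)

Notation "A *t B" := (tensmx A B) (at level 40, left associativity).

Definition ketbra (i j : 'I_2) : 'M[algC]_2 := delta_mx i j.
Definition e00 := ketbra 0 0.
Definition e01 := ketbra 0 1.
Definition e10 := ketbra 1 0.
Definition e11 := ketbra 1 1.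

Definition I2 : 'M[algC]_2 := 1%:M.
Definition sigma1 : 'M[algC]_2 := e01 + e10.
Definition Hadamard : 'M[algC]_2 :=
  (sqrtC 2)^-1 *: \matrix_(i < 2, j < 2) (if (i == 1) && (j == 1) then -1 else 1).

Definition CNOT : 'M[algC]_(2 * 2) := e00 *t I2 + e11 *t sigma1.

Definition CNOT_AC : 'M[algC]_(2 * 2 * 2) :=
  e00 *t I2 *t I2 + e11 *t I2 *t sigma1.

Definition U3 : 'M[algC]_(2 * 2 * 2) :=
  CNOT *t I2 - 2%:R *: (e11 *t e01 *t e11).

Definition U6 : 'M[algC]_(2 * 2 * 2) :=
  CNOT_AC *m (Hadamard *t I2 *t I2) *m U3.

Definition has_product_decomp (U : 'M[algC]_(2 * 2 * 2)) (r : nat) : Prop :=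
  exists (A B C : 'I_r -> 'M[algC]_2), U = \sum_(j < r) (A j *t B j *t C j).

Definition schmidt_rank_is (U : 'M[algC]_(2 * 2 * 2)) (r : nat) : Prop :=
  has_product_decomp U r /\ forall r', has_product_decomp U r' -> (r <= r')%N.

From mathcomp Require Import all_boot all_algebra all_field.
From mathcomp Require Import mxtens ring.
Set Implicit Arguments. Unset Strict Implicit. Unset Printing Implicit Defensive.
Import GRing.Theory Num.Theory.
Local Open Scope ring_scope.

(* Upper bound: multiplying out U6 = CNOT_AC (H (x) I (x) I) U3 with the
   sandwich rule |i><j| M |k><l| = M_jk |i><l| gives six product terms.

   Lower bound (substitution method).  For an operator U on A(x)B(x)C let
   [cblock U a k g l] be the 2x2 matrix acting on C obtained by fixing the
   A-entry (a,k) and the B-entry (g,l); a decomposition U = sum_j A_j(x)B_j(x)C_j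
   gives cblock U a k g l = sum_j (A_j)_ak (B_j)_gl C_j.  Two linear functionals
   on 2x2 matrices, P M = M_01 - M_10 and Q M = M_11 - M_00 (offdiag_diff and
   diag_diff below), vanish on every block of U6 whose B-column is 0, while the
   blocks (a,k,g,l) = (0,1,0,1) and (1,1,0,1) force (P C_j, Q C_j)_j to span
   C^2: there are two terms j1 <> j2 with independent (P,Q)-values.
   Correcting each C_j by a combination of P C_j and Q C_j then kills terms j1
   and j2 without changing the 4x4 flattening
   (a,k) x (a',k') -> U6[(a,k',a'),(k,0,0)], which is invertible.  Hence it is
   a sum of at most r - 2 rank-one matrices, and r - 2 >= 4. *)

Lemma ord2P (i : 'I_2) : i = 0 \/ i = 1.
Proof. by case: i => [[|[|//]]] Hi; [left|right]; apply: val_inj. Qed.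

Lemma tensmxDl (R : pzRingType) m n p q (A B : 'M[R]_(m, n)) (C : 'M[R]_(p, q)) :
  (A + B) *t C = A *t C + B *t C.
Proof. by apply/matrixP=> i j; rewrite !mxE mulrDl. Qed.

Lemma tensmxZl (R : pzRingType) m n p q a (A : 'M[R]_(m, n)) (C : 'M[R]_(p, q)) :
  (a *: A) *t C = a *: (A *t C).
Proof. by apply/matrixP=> i j; rewrite !mxE mulrA. Qed.

Lemma delta_sandwich (R : comPzRingType) m n p q (i : 'I_m) (j : 'I_n)
    (k : 'I_p) (l : 'I_q) (M : 'M[R]_(n, p)) :
  delta_mx i j *m M *m delta_mx k l = M j k *: delta_mx i l.
Proof.
apply/matrixP=> x y; rewrite !mxE (bigD1 k) //= big1 => [|b /negbTE nbk]; last first.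
  by rewrite !mxE nbk mulr0.
rewrite !mxE (bigD1 j) //= big1 => [|a /negbTE naj]; last first.
  by rewrite !mxE naj andbF mul0r.
rewrite !mxE !eqxx; case: (x == i); case: (y == l);
  by rewrite /= ?(mul0r, mulr0, mul1r, mulr1, addr0).
Qed.

Definition s2 : algC := (sqrtC 2)^-1.

Lemma s2_neq0 : s2 != 0.
Proof. by rewrite /s2 invr_eq0 sqrtC_eq0 pnatr_eq0. Qed.

Lemma Hadamard_entry (i j : 'I_2) :
  Hadamard i j = if (i == 1) && (j == 1) then - s2 else s2.
Proof. by rewrite /Hadamard !mxE; case: ifP; rewrite ?mulrN mulr1. Qed.

Definition Aterm (j : 'I_6) : 'M[algC]_2 :=
  nth 0 [:: s2 *: e00; s2 *: e01; (- 2%:R * s2) *: e01;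
            s2 *: e10; (- s2) *: e11; (2%:R * s2) *: e11] j.
Definition Bterm (j : 'I_6) : 'M[algC]_2 :=
  nth 0 [:: I2; sigma1; e01; I2; sigma1; e01] j.
Definition Cterm (j : 'I_6) : 'M[algC]_2 :=
  nth 0 [:: I2; I2; e11; sigma1; sigma1; e01] j.

Lemma U6_decomp : U6 = \sum_(j < 6) (Aterm j *t Bterm j *t Cterm j).
Proof.
have U3E : U3 = e00 *t I2 *t I2 + e11 *t sigma1 *t I2
                + (- 2%:R *: e11) *t e01 *t e11.
  by rewrite /U3 /CNOT !tensmxDl !tensmxZl scaleNr.
have sigma_e11 : sigma1 *m I2 *m e11 = e01.
  rewrite /I2 mulmx1 /sigma1 mulmxDl /e01 /e10 /e11 /ketbra.
  by rewrite mul_delta_mx mul_delta_mx_0 ?addr0.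
rewrite /U6 U3E /CNOT_AC !mulmxDl !mulmxDr !tensmx_mul -!(scalemxAr (- 2%:R)).
rewrite sigma_e11 /e00 /e11 /ketbra !delta_sandwich !Hadamard_entry /=.
rewrite /I2 !mul1mx !mulmx1 !tensmxZl !scalerA mulrNN.
rewrite !big_ord_recl big_ord0 /= /Aterm /Bterm /Cterm /=.
by rewrite !tensmxZl addr0 !addrA.
Qed.

Lemma rank_sum_outer (F : fieldType) r m n (u : 'I_r -> 'cV[F]_m)
    (v : 'I_r -> 'rV[F]_n) :
  (\rank (\sum_(j < r) u j *m v j)%R <= #|[set j | v j != 0%R]|)%N.
Proof.
rewrite -sum1_card [X in (_ <= X)%N]big_mkcond /=.
apply: (big_ind2 (fun (M : 'M_(m, n)) (k : nat) => \rank M <= k)%N).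
- by rewrite mxrank0.
- move=> M1 k1 M2 k2 le1 le2.
  exact: leq_trans (mxrank_add M1 M2) (leq_add le1 le2).
- move=> j _; rewrite inE; have [->|_] := eqVneq (v j) 0.
    by rewrite mulmx0 mxrank0.
  exact: leq_trans (mxrankM_maxl _ _) (rank_leq_col _).
Qed.

Lemma card_avoiding_two (T : finType) (x y : T) (S : {set T}) :
  x != y -> x \notin S -> y \notin S -> (#|S| + 2 <= #|T|)%N.
Proof.
move=> xy xS yS; rewrite -(cardsC [set x; y]) cards2 xy addnC leq_add2l.
apply: subset_leq_card; apply/subsetP => z zS.
rewrite !inE; apply/norP.
by split; [apply: contraNneq xS | apply: contraNneq yS] => <-.
Qed.

Lemma wedge_sum (R : comPzRingType) r (w1 w2 P Q : 'I_r -> R) :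
  (forall j k, P j * Q k = Q j * P k) ->
  (\sum_(j < r) w1 j * P j) * (\sum_(j < r) w2 j * Q j)
  = (\sum_(j < r) w1 j * Q j) * (\sum_(j < r) w2 j * P j).
Proof.
move=> minor0; rewrite !big_distrlr.
apply: eq_bigr => j _; apply: eq_bigr => k _ /=.
transitivity (w1 j * w2 k * (P j * Q k)); first by ring.
by rewrite minor0; ring.
Qed.

Lemma entry_comb r (c : 'I_r -> algC) (M : 'I_r -> 'M[algC]_2) x y :
  (\sum_(j < r) c j *: M j) x y = \sum_(j < r) c j * M j x y.
Proof. by rewrite summxE; apply: eq_bigr => j _; rewrite mxE. Qed.

Definition idx3 (i1 i2 i3 : 'I_2) : 'I_(2 * 2 * 2) :=
  mxtens_index (mxtens_index (i1, i2), i3).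

Definition cblock (U : 'M[algC]_(2 * 2 * 2)) (a k g l : 'I_2) : 'M[algC]_2 :=
  \matrix_(i, i') U (idx3 a g i) (idx3 k l i').

Lemma cblock_decomp r (A B C : 'I_r -> 'M[algC]_2) a k g l :
  cblock (\sum_(j < r) (A j *t B j *t C j)) a k g l
  = \sum_(j < r) (A j a k * B j g l) *: C j.
Proof.
apply/matrixP=> i i'; rewrite entry_comb !mxE summxE.
by apply: eq_bigr => j _; rewrite !tensmxE.
Qed.

(* Two linear functionals on 2x2 matrices; both vanish on I2 and sigma1. *)
Definition offdiag_diff (M : 'M[algC]_2) : algC := M 0 1 - M 1 0.
Definition diag_diff (M : 'M[algC]_2) : algC := M 1 1 - M 0 0.

Lemma offdiag_diff_comb r (c : 'I_r -> algC) (M : 'I_r -> 'M[algC]_2) :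
  offdiag_diff (\sum_(j < r) c j *: M j) = \sum_(j < r) c j * offdiag_diff (M j).
Proof.
by rewrite /offdiag_diff !entry_comb -sumrB; apply: eq_bigr => j _; rewrite mulrBr.
Qed.

Lemma diag_diff_comb r (c : 'I_r -> algC) (M : 'I_r -> 'M[algC]_2) :
  diag_diff (\sum_(j < r) c j *: M j) = \sum_(j < r) c j * diag_diff (M j).
Proof.
by rewrite /diag_diff !entry_comb -sumrB; apply: eq_bigr => j _; rewrite mulrBr.
Qed.

Definition pq_wedge (M N : 'M[algC]_2) : algC :=
  offdiag_diff M * diag_diff N - diag_diff M * offdiag_diff N.

Definition flat00 (U : 'M[algC]_(2 * 2 * 2)) : 'M[algC]_(2 * 2) :=
  \matrix_(e, c) cblock U (mxtens_unindex e).1 (mxtens_unindex e).2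
                          (mxtens_unindex c).2 0 (mxtens_unindex c).1 0.

Lemma U6_cblock a k g l :
  cblock U6 a k g l = \sum_(j < 6) (Aterm j a k * Bterm j g l) *: Cterm j.
Proof. by rewrite U6_decomp cblock_decomp. Qed.

Ltac expand_U6_terms :=
  rewrite /Aterm /Bterm /Cterm /offdiag_diff /diag_diff !big_ord_recl !big_ord0 /=
    /sigma1 /e00 /e01 /e10 /e11 /ketbra /I2 ?mxE /=.

Lemma U6_block_col0 (a k g : 'I_2) :
  offdiag_diff (cblock U6 a k g 0) = 0 /\ diag_diff (cblock U6 a k g 0) = 0.
Proof.
split; case: (ord2P a) => ->; case: (ord2P k) => ->; case: (ord2P g) => ->;
  rewrite U6_cblock ?offdiag_diff_comb ?diag_diff_comb; expand_U6_terms; ring.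
Qed.

Lemma U6_block_col1 :
  [/\ offdiag_diff (cblock U6 0 1 0 1) = 0,
      diag_diff (cblock U6 0 1 0 1) = - (2%:R * s2),
      offdiag_diff (cblock U6 1 1 0 1) = 2%:R * s2
    & diag_diff (cblock U6 1 1 0 1) = 0].
Proof.
by split; rewrite U6_cblock ?offdiag_diff_comb ?diag_diff_comb; expand_U6_terms; ring.
Qed.

Definition sign4 : 'rV[algC]_(2 * 2) :=
  \row_c (if c == mxtens_index (1, 1) then -1 else 1).

Lemma flat00_U6 : flat00 U6 = s2 *: diag_mx sign4.
Proof.
apply/matrixP=> e c; case: (mxtens_indexP e) => a k; case: (mxtens_indexP c) => f g.
rewrite mxE !mxtens_indexK /= U6_cblock entry_comb !mxE.
case: (ord2P a) => ->; case: (ord2P k) => ->.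
all: case: (ord2P f) => ->; case: (ord2P g) => ->; expand_U6_terms; ring.
Qed.

Lemma rank_flat00_U6 : \rank (flat00 U6) = 4%N.
Proof.
rewrite flat00_U6 mxrank_scale_nz ?s2_neq0 //; apply: mxrank_unit.
rewrite unitmxE det_diag unitfE !big_ord_recl big_ord0 !mxE /=.
by rewrite !mul1r mulr1 oppr_eq0 oner_eq0.
Qed.

Lemma U6_independent_terms r (A B C : 'I_r -> 'M[algC]_2) :
  U6 = \sum_(j < r) (A j *t B j *t C j) ->
  exists j1 j2, pq_wedge (C j1) (C j2) != 0.
Proof.
move=> decomp.
case: (boolP [exists j1, exists j2, pq_wedge (C j1) (C j2) != 0]).
  by case/existsP=> j1 /existsP[j2 nz]; exists j1, j2.
move=> /existsPn all0; exfalso.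
have minor0 j k :
    offdiag_diff (C j) * diag_diff (C k) = diag_diff (C j) * offdiag_diff (C k).
  by apply/eqP; rewrite -subr_eq0; move/existsPn: (all0 j) => /(_ k); rewrite negbK.
have [p01 q01 p11 q11] := U6_block_col1.
rewrite decomp !cblock_decomp ?offdiag_diff_comb ?diag_diff_comb in p01 q01 p11 q11.
have := wedge_sum (fun j => A j 0 1 * B j 0 1) (fun j => A j 1 1 * B j 0 1) minor0.
rewrite p01 q01 p11 q11 mul0r => /eqP; apply/negP.
by rewrite eq_sym mulNr oppr_eq0 !mulf_neq0 ?s2_neq0 ?pnatr_eq0.
Qed.

(* Substitution: given two terms j1, j2 with independent values, replace each
   C-column C_j(.,0) by a combination with offdiag_diff C_j and diag_diff C_j
   vanishing for j1 and j2.  This does not change the flattening (up to the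
   nonzero factor d), since both functionals vanish on the relevant blocks. *)
Lemma U6_flat00_substitution r (A B C : 'I_r -> 'M[algC]_2) (j1 j2 : 'I_r) :
  U6 = \sum_(j < r) (A j *t B j *t C j) ->
  exists (u : 'I_r -> 'cV_(2 * 2)) (v : 'I_r -> 'rV_(2 * 2)),
    [/\ v j1 = 0, v j2 = 0 &
        \sum_(j < r) u j *m v j = pq_wedge (C j1) (C j2) *: flat00 U6].
Proof.
move=> decomp.
pose P j := offdiag_diff (C j); pose Q j := diag_diff (C j).
pose d := pq_wedge (C j1) (C j2).
(* al and be are the Cramer coefficients making psi vanish at j1 and j2. *)
pose al f := C j1 f 0 * Q j2 - Q j1 * C j2 f 0.
pose be f := C j1 f 0 * P j2 - P j1 * C j2 f 0.
pose psi j f := d * C j f 0 - P j * al f + Q j * be f.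
have psi_j1 f : psi j1 f = 0 by rewrite /psi /al /be /d /pq_wedge /P /Q; ring.
have psi_j2 f : psi j2 f = 0 by rewrite /psi /al /be /d /pq_wedge /P /Q; ring.
exists (fun j => \col_e A j (mxtens_unindex e).1 (mxtens_unindex e).2).
exists (fun j => \row_c (B j (mxtens_unindex c).2 0 * psi j (mxtens_unindex c).1)).
split; [by apply/matrixP=> i c; rewrite !mxE psi_j1 mulr0 ..
       |by apply/matrixP=> i c; rewrite !mxE psi_j2 mulr0 |].
apply/matrixP=> e c; case: (mxtens_indexP e) => a k; case: (mxtens_indexP c) => f g.
have [Pblk Qblk] := U6_block_col0 a k g.
rewrite summxE.
under eq_bigr => j _ do rewrite !mxE big_ord1 !mxE !mxtens_indexK /=.
rewrite [RHS]mxE [flat00 U6 _ _]mxE !mxtens_indexK /= -/d.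
set blk := cblock U6 a k g 0.
transitivity (d * blk f 0 - al f * offdiag_diff blk + be f * diag_diff blk); last first.
  by rewrite Pblk Qblk !mulr0 subr0 addr0.
rewrite /blk decomp cblock_decomp entry_comb offdiag_diff_comb diag_diff_comb.
rewrite !mulr_sumr -sumrB -big_split /=; apply: eq_bigr => j _.
by rewrite /psi /P /Q; ring.
Qed.

Lemma U6_rank_lower r (A B C : 'I_r -> 'M[algC]_2) :
  U6 = \sum_(j < r) (A j *t B j *t C j) -> (6 <= r)%N.
Proof.
move=> decomp.
have [j1 [j2 indep]] := U6_independent_terms decomp.
have j12 : j1 != j2.
  by apply: contraNneq indep => <-; rewrite /pq_wedge mulrC subrr.
have [u [v [v1 v2 uvE]]] := U6_flat00_substitution j1 j2 decomp.
have := rank_sum_outer u v; rewrite uvE mxrank_scale_nz // rank_flat00_U6 => rk4.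
have := @card_avoiding_two _ j1 j2 [set j | v j != 0] j12.
rewrite !inE v1 v2 eqxx card_ord => /(_ isT isT).
by rewrite -(leq_add2r 2) in rk4; apply: leq_trans rk4.
Qed.

Theorem mainTheorem16 : schmidt_rank_is U6 6.
Proof.
split; first by exists Aterm, Bterm, Cterm; exact: U6_decomp.
by move=> r [A [B [C decomp]]]; exact: U6_rank_lower decomp.
Qed.
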